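(* For sufficiently large $n$, $$R(\mathcal{J},Q_n)\le R(\mathcal{SD}_{1,2},Q_n)\le n+\frac{(2+o(1))\,n}{\log n}.$$
   Context: A copy of a poset $P$ in a poset $P_1$ is an induced subposet of $P_1$ isomorphic to $P$. $Q_n$ is the Boolean lattice of all subsets of an $n$-element set ordered by inclusion. $R(P_1,P_2)$ is the smallest $N$ such that every blue/red coloring of the elements of $Q_N$ contains an all-blue copy of $P_1$ or an all-red copy of $P_2$. The poset $\mathcal{J}$ has four distinct elements $A,B,C,D$ with $B\le C\le D$, $B\le A$, $A$ incomparable to $C$, and $A$ incomparable to $D$ (and no other relations besides those implied). $\mathcal{SD}_{s,t}$ is the poset obtained from two disjoint, mutually element-wise incomparable chains of lengths $s$ and $t$ by adding a common minimum element and a common maximum element. $\log$ is base $2$; $o(1)\to0$ as $n\to\infty$. *)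

From mathcomp Require Import all_boot.
From Stdlib Require Import Reals.

Set Implicit Arguments.
Unset Strict Implicit.
Unset Printing Implicit Defensive.

Definition QN (N : nat) := {set 'I_N}.

Definition is_copy (T : finType) (le : rel T) (N : nat) (f : T -> {set 'I_N}) : Prop :=
  injective f /\ forall x y : T, le x y = (f x \subset f y).

(* Coloring of Q_N: c A = true means A is blue, false means red.
   ramsey_prop P1 P2 N: every blue/red coloring of Q_N contains an all-blue
   copy of P1 or an all-red copy of P2. *)
Definition ramsey_prop (T1 : finType) (le1 : rel T1) (T2 : finType) (le2 : rel T2)
    (N : nat) : Prop :=
  forall c : {set 'I_N} -> bool,
    (exists f : T1 -> {set 'I_N}, is_copy le1 f /\ forall x, c (f x) = true) \/
    (exists g : T2 -> {set 'I_N}, is_copy le2 g /\ forall x, c (g x) = false).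

Definition is_ramsey_number (T1 : finType) (le1 : rel T1) (T2 : finType) (le2 : rel T2)
    (r : nat) : Prop :=
  ramsey_prop le1 le2 r /\ forall M, M < r -> ~ ramsey_prop le1 le2 M.

Definition Qle (n : nat) : rel {set 'I_n} := fun A B => A \subset B.

(* The poset J on 'I_4 with A = 0, B = 1, C = 2, D = 3:
   B <= C <= D, B <= A (reflexive-transitive closure). *)
Definition Jle : rel 'I_4 := fun x y =>
  [|| x == y,
      (val x == 1) && (val y == 2),
      (val x == 2) && (val y == 3),
      (val x == 1) && (val y == 3)
    | (val x == 1) && (val y == 0)].

(* The subdivided diamond SD_{s,t} on 'I_(s+t+2): 0 is the minimum,
   s+t+1 is the maximum, 1..s form the first chain (s elements), s+1..s+t form
   the second chain (t elements); elements of distinct chains are incomparable. *)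
Definition SDle (s t : nat) : rel 'I_(s + t + 2) := fun x y =>
  [|| val x == 0, val y == s + t + 1
    | (val x <= val y) && ((val y <= s) || (s < val x))].

(* Let m be such that 2^n < m!, put N = n + 2m and fix a coloring of Q_N with
   no red copy of Q_n.  The ground set of Q_N is the n "old" points followed by
   2m "new" points.  A word w listing all the new points determines layers
   emb(S) u {w_0, ..., w_(l-1)}; the chain lemma shows that for every such word
   there is a blue chain of layers emb(s_0) u {} c ... c emb(s_2m) u {new
   points}, since otherwise a threshold construction yields a red copy of Q_n.
   Words interleaving two permutations of the two halves of the new points
   give (m!)^2 > (2^n)^2 blue chains, so two of them share their bottom and
   top sets; at the first position where their words differ one reads off a
   blue copy of SD_{1,2}.  As J is an induced subposet of SD_{1,2}, this bounds
   both Ramsey numbers by n + 2m.  Finally, Stirling-type estimates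
   ln(m!) >= m ln m - m show that m = ceil((1 + eps/4) n ln 2 / ln n) works
   for large n, giving n + (2 + eps) n / log n. *)

From mathcomp Require Import all_boot.
From Stdlib Require Import Reals.
From mathcomp Require Import fingroup perm zify.
From Stdlib Require Import Lra ZArith ClassicalEpsilon Classical.

Set Implicit Arguments.
Unset Strict Implicit.
Unset Printing Implicit Defensive.

(* Boolean reflection of an arbitrary proposition, used to minimize over
   undecidable predicates with ex_minn. *)
Definition classicb (P : Prop) : bool :=
  if excluded_middle_informative P then true else false.

Lemma classicbP (P : Prop) : reflect P (classicb P).
Proof. by rewrite /classicb; case: excluded_middle_informative => h; constructor. Qed.

(* Five sets A c C, D c E c B realize SD_{1,2} (A bottom, C the short chain,
   D c E the long chain, B top) as soon as the eight inclusions that must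
   fail do fail; a uniformly colored such family is a monochromatic copy. *)
Lemma sd12_copy (N : nat) (c : {set 'I_N} -> bool) (A C D E B : {set 'I_N}) :
  A \subset C -> A \subset D -> D \subset E -> E \subset B -> C \subset B ->
  ~~ (C \subset A) -> ~~ (D \subset A) -> ~~ (B \subset C) -> ~~ (B \subset E) ->
  ~~ (E \subset D) -> ~~ (C \subset E) -> ~~ (D \subset C) ->
  c A -> c C -> c D -> c E -> c B ->
  exists f : 'I_(1 + 2 + 2) -> {set 'I_N},
    is_copy (@SDle 1 2) f /\ forall x, c (f x) = true.
Proof.
move=> AC AD DE EB CB CA DA BC BE ED CE DC cA cC cD cE cB.
have AE := subset_trans AD DE; have AB := subset_trans AE EB.
have DB := subset_trans DE EB.
have EA : ~~ (E \subset A) by apply: contra DA => h; apply: subset_trans DE h.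
have BA : ~~ (B \subset A) by apply: contra CA => h; apply: subset_trans CB h.
have BD : ~~ (B \subset D) by apply: contra BE => h; apply: subset_trans h DE.
have CD : ~~ (C \subset D) by apply: contra CE => h; apply: subset_trans h DE.
have EC : ~~ (E \subset C) by apply: contra DC => h; apply: subset_trans DE h.
pose f (x : 'I_(1 + 2 + 2)) := nth B [:: A; C; D; E] (val x).
have ord x y : SDle x y = (f x \subset f y).
  case: x => [[|[|[|[|[|x]]]]] hx] //=; case: y => [[|[|[|[|[|y]]]]] hy] //=;
  rewrite /SDle /f /= ?subxx ?AC ?AD ?DE ?EB ?CB ?AE ?AB ?DB
    ?(negbTE CA) ?(negbTE DA) ?(negbTE BC) ?(negbTE BE) ?(negbTE ED)
    ?(negbTE CE) ?(negbTE DC) ?(negbTE EA) ?(negbTE BA) ?(negbTE BD)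
    ?(negbTE CD) ?(negbTE EC) //.
exists f; split; last by move=> [[|[|[|[|[|x]]]]] hx].
split=> // x y fxy.
have := ord x y; have := ord y x; rewrite fxy subxx.
by case: x y {fxy} => [[|[|[|[|[|x]]]]] hx] [[|[|[|[|[|y]]]]] hy] //= *; apply/val_inj.
Qed.

(* Layers of Q_(n+K): the first n points are old, the last K are new. *)
Section Layers.
Variables (n K : nat).
Local Notation U := 'I_(n + K).

Definition emb (S : {set 'I_n}) : {set U} := lshift K @: S.

Definition prefix (w : nat -> U) (l : nat) : {set U} :=
  [set u | has (fun q => w q == u) (iota 0 l)].

Definition layer (w : nat -> U) (S : {set 'I_n}) (l : nat) : {set U} :=
  emb S :|: prefix w l.

Lemma mem_emb S i : (lshift K i \in emb S) = (i \in S).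
Proof. by rewrite mem_imset //; apply: lshift_inj. Qed.

Lemma emb_old S u : u \in emb S -> val u < n.
Proof. by case/imsetP=> i _ ->; rewrite /= ltn_ord. Qed.

Lemma prefixP w l u : reflect (exists2 q, q < l & w q = u) (u \in prefix w l).
Proof.
rewrite inE; apply: (iffP hasP) => [[q]|[q ql <-]].
  by rewrite mem_iota add0n => /andP[_ ql] /eqP <-; exists q.
by exists q; rewrite ?mem_iota ?add0n ?ql.
Qed.

Lemma prefix_mono w l l' : l <= l' -> prefix w l \subset prefix w l'.
Proof.
move=> ll'; apply/subsetP => u /prefixP[q ql <-]; apply/prefixP.
by exists q => //; apply: leq_trans ql ll'.
Qed.

Lemma prefix0 w : prefix w 0 = set0.
Proof. by apply/setP => u; rewrite inE. Qed.

Lemma mem_layer_new w S l u : n <= val u -> (u \in layer w S l) = (u \in prefix w l).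
Proof.
move=> nu; rewrite inE; case: (boolP (u \in emb S)) => // /emb_old.
by rewrite ltnNge nu.
Qed.

(* If the word only uses new points, then for any nondecreasing height
   function t the layers S |-> layer w S (t S) form a copy of Q_n: the old
   part of the layer determines S. *)
Lemma layer_copy (w : nat -> U) (t : {set 'I_n} -> nat) :
  (forall q, n <= val (w q)) -> {homo t : S S' / S \subset S' >-> S <= S'} ->
  is_copy (@Qle n) (fun S => layer w S (t S)).
Proof.
move=> w_new t_mono.
have reflect_sub S S' : layer w S (t S) \subset layer w S' (t S') -> S \subset S'.
  move=> h; apply/subsetP => x xS.
  have /(subsetP h) : lshift K x \in layer w S (t S) by rewrite inE mem_emb xS.
  rewrite inE mem_emb => /orP[//|/prefixP[q _ wq]].
  by have := w_new q; rewrite wq /= leqNgt ltn_ord.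
have mono (S S' : {set 'I_n}) : S \subset S' -> layer w S (t S) \subset layer w S' (t S').
  by move=> h; apply: setUSS; [apply: imsetS | apply: prefix_mono; apply: t_mono].
split.
  by move=> S S' e; apply/eqP; rewrite eqEsubset !reflect_sub ?e.
by move=> S S'; apply/idP/idP; [apply: mono | apply: reflect_sub].
Qed.

Definition blue_chain (c : {set U} -> bool) w (s : nat -> {set 'I_n}) k :=
  (forall l, l < k -> s l \subset s l.+1) /\ (forall l, l <= k -> c (layer w (s l) l)).

Definition blue_below c w (S : {set 'I_n}) i :=
  exists s, blue_chain c w s i /\ s i \subset S.

Section BlueBelow.
Variables (c : {set U} -> bool) (w : nat -> U).

Lemma blue_below_mono (S S' : {set 'I_n}) i :
  S \subset S' -> blue_below c w S i -> blue_below c w S' i.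
Proof. by move=> SS' [s [ch si]]; exists s; split=> //; apply: subset_trans SS'. Qed.

Lemma blue_below0 S : c (layer w S 0) -> blue_below c w S 0.
Proof. by move=> cS; exists (fun _ => S); split=> //; split=> // l; rewrite leqn0 => /eqP ->. Qed.

Lemma blue_below_succ S i :
  blue_below c w S i -> c (layer w S i.+1) -> blue_below c w S i.+1.
Proof.
move=> [s [[s_mono s_blue] siS]] cS.
exists (fun l => if l == i.+1 then S else s l); split; last by rewrite eqxx.
split=> l; rewrite ?ltnS leq_eqVlt => /orP[/eqP ->|li].
- by rewrite eqxx (ltn_eqF (ltnSn i)).
- by rewrite !ifN_eq ?s_mono //; lia.
- by rewrite eqxx.
- by rewrite ifN_eq ?s_blue //; lia.
Qed.

Lemma blue_chain_mono s k p q :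
  blue_chain c w s k -> p <= q -> q <= k -> s p \subset s q.
Proof.
move=> [s_mono _] pq; elim: q pq => [|q IH]; first by rewrite leqn0 => /eqP ->.
rewrite leq_eqVlt => /orP[/eqP -> //|pq] qk.
exact: subset_trans (IH pq (ltnW qk)) (s_mono q qk).
Qed.

Hypothesis w_new : forall q, n <= val (w q).

Lemma mem_layer_letter S k q l :
  {in gtn k &, injective w} -> q < k -> l <= k -> (w q \in layer w S l) = (q < l).
Proof.
move=> w_inj qk lk; rewrite mem_layer_new //; apply/prefixP/idP => [[r rl wr]|ql].
  by rewrite -(w_inj r q) //; apply: leq_trans lk.
by exists q.
Qed.

Lemma blue_chain_layer_sub s k p q :
  {in gtn k &, injective w} -> blue_chain c w s k -> p <= k -> q <= k ->
  (layer w (s p) p \subset layer w (s q) q) = (p <= q).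
Proof.
move=> w_inj ch pk qk; apply/idP/idP => [sub|pq].
  rewrite leqNgt; apply/negP => qp.
  have /(subsetP sub) : w q \in layer w (s p) p.
    by rewrite (@mem_layer_letter _ k) //; lia.
  by rewrite (@mem_layer_letter _ k) ?ltnn //; lia.
apply: setUSS; last exact: prefix_mono.
by apply: imsetS; apply: blue_chain_mono ch pq qk.
Qed.

Variable k : nat.
Hypothesis no_blue_chain : forall s, ~ blue_chain c w s k.

Lemma threshold_exists S : exists i, ~~ classicb (blue_below c w S i).
Proof. by exists k; apply/classicbP => -[s [ch _]]; apply: (no_blue_chain ch). Qed.

Definition threshold S : nat := ex_minn (threshold_exists S).

Lemma threshold_not_below S : ~ blue_below c w S (threshold S).
Proof. by rewrite /threshold; case: ex_minnP => i /classicbP. Qed.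

Lemma threshold_min S i : ~ blue_below c w S i -> threshold S <= i.
Proof.
move=> below; rewrite /threshold; case: ex_minnP => j _; apply.
exact/(introN (classicbP _)).
Qed.

Lemma threshold_mono : {homo threshold : S S' / S \subset S' >-> S <= S'}.
Proof.
move=> S S' SS'; apply: threshold_min => below.
by apply: (@threshold_not_below S'); apply: blue_below_mono below.
Qed.

Lemma threshold_red S : c (layer w S (threshold S)) = false.
Proof.
apply/negP => cS; apply: (@threshold_not_below S).
case E: (threshold S) cS => [|i] cS; first exact: blue_below0.
apply: blue_below_succ cS; apply: NNPP => /threshold_min.
by rewrite E ltnn.
Qed.

End BlueBelow.

Lemma chain_lemma (c : {set U} -> bool) (w : nat -> U) (k : nat) :
  (forall q, n <= val (w q)) ->
  (exists g, is_copy (@Qle n) g /\ forall x, c (g x) = false) \/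
  (exists s, blue_chain c w s k).
Proof.
move=> w_new; case: (classic (exists s, blue_chain c w s k)) => [|no_chain]; first by right.
have no_blue_chain s : ~ blue_chain c w s k by move=> ch; apply: no_chain; exists s.
left; exists (fun S => layer w S (threshold no_blue_chain S)); split.
  exact/layer_copy/threshold_mono.
exact: threshold_red.
Qed.

End Layers.

(* Two blue chains of length k along two different words over the same new
   letters, with the same bottom and top sets, produce a blue SD_{1,2}
   provided the words never move a letter by an odd number of positions. *)
Section TwoChains.
Variables (n k : nat) (c : {set 'I_(n + k)} -> bool) (w w' : nat -> 'I_(n + k)).
Variables (s s' : nat -> {set 'I_n}).
Hypotheses (w_new : forall q, n <= val (w q)) (w'_new : forall q, n <= val (w' q)).
Hypotheses (w_inj : {in gtn k &, injective w}) (w'_inj : {in gtn k &, injective w'}).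
Hypothesis same_letters : prefix w k = prefix w' k.
Hypothesis same_parity : forall q p, w q = w' p -> odd q = odd p.
Hypothesis words_differ : exists q, (q < k) && (w q != w' q).

Lemma first_divergence : exists l, [/\ l.+2 < k,
  w l \notin prefix w' l.+2 & w' l \notin prefix w l.+1].
Proof.
case: (ex_minnP words_differ) => l /andP[lk wl] l_min.
have agree q : q < l -> w q = w' q.
  move=> ql; apply/eqP/negPn/negP => neq.
  by have := l_min q; rewrite neq (ltn_trans ql lk) leqNgt ql => /(_ isT).
have : w l \in prefix w' k by rewrite -same_letters; apply/prefixP; exists l.
case/prefixP=> p pk w'p.
have lp : l < p.
  rewrite ltnNge leq_eqVlt; apply/negP => /orP[/eqP pl|pl].
    by move: wl; rewrite -w'p pl eqxx.
  have := w_inj (ltn_trans pl lk) lk; rewrite agree // w'p => /(_ erefl) pl'.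
  by rewrite pl' ltnn in pl.
have l2p : l.+2 <= p.
  have := same_parity (esym w'p); rewrite ltn_neqAle lp andbT.
  by case: eqP => // <- /=; case: (odd l).
exists l; split; first by lia.
  apply/prefixP => -[r rl w'r].
  by have := w'_inj (_ : r < k) pk; rewrite w'r w'p => /(_ _ erefl); lia.
apply/prefixP => -[r]; rewrite ltnS leq_eqVlt => /orP[/eqP -> /eqP|rl wr].
  by rewrite (negbTE wl).
by have := w'_inj (_ : r < k) lk; rewrite -wr agree // => /(_ _ erefl); lia.
Qed.

Hypotheses (blue : blue_chain c w s k) (blue' : blue_chain c w' s' k).
Hypotheses (same_bottom : s 0 = s' 0) (same_top : s k = s' k).

Lemma two_chains_sd12 : exists f : 'I_(1 + 2 + 2) -> {set 'I_(n + k)},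
  is_copy (@SDle 1 2) f /\ forall x, c (f x) = true.
Proof.
have [l [l2k wl_late w'l_late]] := first_divergence.
have sub := blue_chain_layer_sub w_new w_inj blue.
have sub' := blue_chain_layer_sub w'_new w'_inj blue'.
have bottom : layer w (s 0) 0 = layer w' (s' 0) 0 by rewrite /layer !prefix0 same_bottom.
have top : layer w (s k) k = layer w' (s' k) k by rewrite /layer same_letters same_top.
have wl_C : w l \in layer w (s l.+1) l.+1.
  by rewrite mem_layer_new //; apply/prefixP; exists l.
have w'l_D : w' l \in layer w' (s' l.+1) l.+1.
  by rewrite mem_layer_new //; apply/prefixP; exists l.
apply: (@sd12_copy _ c (layer w (s 0) 0) (layer w (s l.+1) l.+1)
  (layer w' (s' l.+1) l.+1) (layer w' (s' l.+2) l.+2) (layer w (s k) k));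
  rewrite ?sub ?sub' //; try lia.
all: rewrite ?bottom ?top ?sub' //; try lia.
- by apply/negP => /subsetP /(_ _ wl_C); rewrite mem_layer_new // (negbTE wl_late).
- by apply/negP => /subsetP /(_ _ w'l_D); rewrite mem_layer_new // (negbTE w'l_late).
- by case: blue' => _; apply.
- by case: blue => _; apply; lia.
all: by case: blue' => _; apply; lia.
Qed.

End TwoChains.

(* The new points of Q_(n+2m) split into two halves of size m; a pair of
   permutations (a, b) of 'I_m yields the word reading a_0, b_0, a_1, b_1, ...
   (a-letters at even positions, b-letters at odd positions). *)
Section Interleave.
Variables (n m' : nat).
Local Notation m := m'.+1.
Local Notation U := 'I_(n + (m + m)).

Definition interleave (a b : {perm 'I_m}) (q : nat) : U :=
  if odd q then rshift n (rshift m (b (inord q./2)))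
  else rshift n (lshift m (a (inord q./2))).

Lemma interleave_val a b q : val (interleave a b q) =
  if odd q then n + (m + b (inord q./2)) else n + a (inord q./2).
Proof. by rewrite /interleave; case: (odd q). Qed.

Lemma interleave_new a b q : n <= val (interleave a b q).
Proof. by rewrite interleave_val; case: (odd q); rewrite leq_addr. Qed.

(* Parity of a position is recorded by the half its letter lies in. *)
Lemma interleave_parity a b a' b' q p :
  interleave a b q = interleave a' b' p -> odd q = odd p.
Proof.
move/(congr1 val); rewrite !interleave_val.
case: (odd q); case: (odd p) => // e.
- by have := ltn_ord (a' (inord p./2)); lia.
- by have := ltn_ord (a (inord q./2)); lia.
Qed.

Lemma interleave_inj a b : {in gtn (m + m) &, injective (interleave a b)}.
Proof.
move=> q q'; rewrite !inE => qk q'k e; have same_odd := interleave_parity e.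
have half_eq : q./2 = q'./2 -> q = q'.
  by move=> eh; rewrite -(odd_double_half q) -(odd_double_half q') same_odd eh.
have [qm q'm] : q./2 < m /\ q'./2 < m by lia.
move: e => /(congr1 val); rewrite !interleave_val -same_odd.
case: (odd q) => e; apply: half_eq.
- have : b (inord q./2) = b (inord q'./2) by apply: val_inj => /=; lia.
  by move/perm_inj/(congr1 val); rewrite /= !inordK.
- have : a (inord q./2) = a (inord q'./2) by apply: val_inj => /=; lia.
  by move/perm_inj/(congr1 val); rewrite /= !inordK.
Qed.

Lemma interleave_letters a b :
  prefix (interleave a b) (m + m) = [set u : U | n <= val u].
Proof.
apply/setP => u; apply/prefixP/idP => [[q _ <-]|]; first by rewrite inE interleave_new.
rewrite inE => nu; have uk := ltn_ord u.
case: (ltnP (val u) (n + m)) => um; move: nu um => /= nu um.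
  pose j : 'I_m := inord (val u - n).
  exists ((a^-1)%g j).*2; first by have := ltn_ord ((a^-1)%g j); lia.
  apply: val_inj; rewrite interleave_val odd_double doubleK inord_val permKV /j inordK /=; lia.
pose j : 'I_m := inord (val u - n - m).
exists ((b^-1)%g j).*2.+1; first by have := ltn_ord ((b^-1)%g j); lia.
apply: val_inj.
by rewrite interleave_val /= odd_double /= uphalf_double inord_val permKV /j inordK /=; lia.
Qed.

Lemma perm_differ (T : finType) (a a' : {perm T}) : a <> a' -> exists j, a j != a' j.
Proof.
case: (pickP (fun j => a j != a' j)) => [j aj|same] neq; first by exists j.
by case: neq; apply/permP => j; apply/eqP; rewrite -[_ == _]negbK same.
Qed.

Lemma interleave_differ a b a' b' : (a, b) <> (a', b') ->
  exists q, (q < m + m) && (interleave a b q != interleave a' b' q).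
Proof.
case: (eqVneq a a') => [<- neq|/eqP/perm_differ[j aj] _].
  have [j bj] : exists j, b j != b' j by apply: perm_differ => eb; apply: neq; rewrite eb.
  exists j.*2.+1; apply/andP; split; first by have := ltn_ord j; lia.
  rewrite /interleave /= odd_double /= uphalf_double inord_val.
  by apply: contra bj => /eqP/rshift_inj/rshift_inj ->.
exists j.*2; apply/andP; split; first by have := ltn_ord j; lia.
rewrite /interleave /= odd_double /= doubleK inord_val.
by apply: contra aj => /eqP/rshift_inj/lshift_inj ->.
Qed.

End Interleave.

Lemma card_subsets n : #|{set 'I_n}| = expn 2 n.
Proof.
have -> : expn 2 n = #|powerset [set: 'I_n]| by rewrite card_powerset cardsT card_ord.
by apply: eq_card => A; rewrite powersetE subsetT.
Qed.

Lemma pigeonhole (T T' : finType) (f : T -> T') :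
  #|T'| < #|T| -> exists x y, f x = f y /\ x <> y.
Proof.
move=> small; apply: NNPP => no_collision.
have f_inj : injective f by move=> x y fxy; apply: NNPP => xy; apply: no_collision; exists x, y.
by have := leq_card f f_inj; rewrite leqNgt small.
Qed.

(* Each of the (m!)^2 interleaved words carries a blue chain; two of them
   share their bottom and top sets, and two_chains_sd12 applies. *)
Lemma ramsey_SD12 n m : expn 2 n < m`! -> ramsey_prop (@SDle 1 2) (@Qle n) (n + (m + m)).
Proof.
case: m => [|m']; first by rewrite fact0 ltnNge expn_gt0.
set k := m'.+1 + m'.+1 => big c.
case: (classic (exists g, is_copy (@Qle n) g /\ forall x, c (g x) = false)); first by right.
move=> no_red; left.
have chain_exists (pr : {perm 'I_m'.+1} * {perm 'I_m'.+1}) :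
    exists s, blue_chain c (interleave n pr.1 pr.2) s k.
  by case: (chain_lemma c k (@interleave_new n m' pr.1 pr.2)).
pose S pr := proj1_sig (constructive_indefinite_description _ (chain_exists pr)).
have S_blue pr : blue_chain c (interleave n pr.1 pr.2) (S pr) k.
  by rewrite /S; case: constructive_indefinite_description.
have [[a b] [[a' b'] [[same_bottom same_top] neq]]] :
    exists pr pr', (S pr 0, S pr k) = (S pr' 0, S pr' k) /\ pr <> pr'.
  by apply: pigeonhole; rewrite !card_prod card_Sn !card_subsets ltn_mul.
apply: (@two_chains_sd12 _ _ c (interleave n a b) (interleave n a' b') (S (a, b)) (S (a', b'))).
- exact: interleave_new.
- exact: interleave_new.
- exact: interleave_inj.
- exact: interleave_inj.
- by rewrite !interleave_letters.
- exact: interleave_parity.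
- exact: interleave_differ.
- exact: (S_blue (a, b)).
- exact: (S_blue (a', b')).
- exact: same_bottom.
- exact: same_top.
Qed.

(* J is the induced subposet of SD_{1,2} obtained by deleting the top:
   B is the bottom, A the short chain and C < D the long chain. *)
Definition J_to_SD12 (x : 'I_4) : 'I_(1 + 2 + 2) := insubd ord0 (nth 0 [:: 1; 0; 2; 3] x).

Lemma J_to_SD12_val x : val (J_to_SD12 x) = nth 0 [:: 1; 0; 2; 3] x.
Proof. by rewrite /J_to_SD12 insubdK //; case: x => [[|[|[|[|x]]]] hx]. Qed.

Lemma J_to_SD12_le x y : Jle x y = SDle (J_to_SD12 x) (J_to_SD12 y).
Proof.
rewrite /SDle !J_to_SD12_val.
by case: x => [[|[|[|[|x]]]] hx] //; case: y => [[|[|[|[|y]]]] hy].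
Qed.

Lemma J_to_SD12_inj : injective J_to_SD12.
Proof.
move=> x y /(congr1 val); rewrite !J_to_SD12_val => e; apply: val_inj.
by case: x e => [[|[|[|[|x]]]] hx] //; case: y => [[|[|[|[|y]]]] hy].
Qed.

Lemma ramsey_J_of_SD12 (T : finType) (le : rel T) N :
  ramsey_prop (@SDle 1 2) le N -> ramsey_prop Jle le N.
Proof.
move=> sd c; case: (sd c) => [[f [[f_inj f_le] f_blue]]|red]; last by right.
left; exists (fun x => f (J_to_SD12 x)); split=> //; split.
  by move=> x y /f_inj /J_to_SD12_inj.
by move=> x y; rewrite J_to_SD12_le f_le.
Qed.

Lemma ramsey_number_le (T1 : finType) (le1 : rel T1) (T2 : finType) (le2 : rel T2) N :
  ramsey_prop le1 le2 N -> exists r, is_ramsey_number le1 le2 r /\ r <= N.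
Proof.
move=> ramN.
have ex : exists k, classicb (ramsey_prop le1 le2 k) by exists N; apply/classicbP.
case: (ex_minnP ex) => r /classicbP ram_r r_min.
exists r; split; last by apply: r_min; apply/classicbP.
split=> // M Mr ramM; have := r_min M (introT (classicbP _) ramM).
by rewrite leqNgt Mr.
Qed.

Section Asymptotics.
Local Open Scope R_scope.

Lemma ln_le_compat a b : 0 < a -> a <= b -> ln a <= ln b.
Proof.
move=> a0 ab; case: (Rle_lt_or_eq_dec _ _ ab) => [lt|->]; last exact: Rle_refl.
exact/Rlt_le/ln_increasing.
Qed.

Lemma ln_le_sub1 x : 0 < x -> ln x <= x - 1.
Proof. by move=> x0; have := exp_ineq1_le (ln x); rewrite exp_ln //; lra. Qed.

(* ln (ln 2) >= -1, from ln x >= 1 - 1/x and ln 2 > 1/2. *)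
Lemma ln_ln2_ge : -1 <= ln (ln 2).
Proof.
have l2 := ln_lt_2; have l0 : 0 < ln 2 by lra.
have := ln_le_sub1 (Rinv_0_lt_compat _ l0); rewrite ln_Rinv //.
have : / ln 2 * ln 2 = 1 by field; lra.
nra.
Qed.

(* A crude polynomial lower bound for exp, enough to show ln y = o(y). *)
Lemma sq_le_exp y : 0 <= y -> y * y / 4 <= exp y.
Proof.
move=> y0; have -> : exp y = exp (y / 2) * exp (y / 2) by rewrite -exp_plus; congr exp; lra.
have := exp_ineq1_le (y / 2); nra.
Qed.

Lemma INR_fact_pos k : 0 < INR k`!.
Proof. exact/lt_0_INR/ltP/fact_gt0. Qed.

(* Stirling-type lower bound ln(k!) >= k ln k - k, by induction using
   ln(1 + 1/a) <= 1/a. *)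
Lemma ln_fact_lower k : (1 <= k)%nat -> INR k * ln (INR k) - INR k <= ln (INR k`!).
Proof.
elim: k => [//|[_ _|k IH _]]; first by rewrite /= ln_1; lra.
have {}IH := IH isT.
rewrite factS mult_INR ln_mult; [|by apply/lt_0_INR/ltP|exact: INR_fact_pos].
set a := INR k.+1 in IH *.
have a1 : 1 <= a by apply: (le_INR 1); apply/leP.
have -> : INR k.+2 = a + 1 by rewrite /a -S_INR.
have step : ln (a + 1) - ln a <= 1 / a.
  have -> : ln (a + 1) - ln a = ln ((a + 1) / a).
    by rewrite /Rdiv ln_mult ?ln_Rinv; try lra; apply: Rinv_0_lt_compat; lra.
  have -> : 1 / a = (a + 1) / a - 1 by field; lra.
  by apply: ln_le_sub1; apply: Rdiv_lt_0_compat; lra.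
have : a * (ln (a + 1) - ln a) <= a * (1 / a) by apply: Rmult_le_compat_l; lra.
have -> : a * (1 / a) = 1 by field; lra.
nra.
Qed.

Lemma INR_expn2 n : INR (expn 2 n) = 2 ^ n.
Proof. by elim: n => [//|n IH]; rewrite expnS mult_INR IH. Qed.

Lemma pow2_lt_fact n M z : 0 < z -> z <= INR M -> INR n * ln 2 < z * (ln z - 1) ->
  (expn 2 n < M`!)%nat.
Proof.
move=> z0 zM big; have l2 := ln_lt_2; have n0 := pos_INR n.
have lnz1 : 1 < ln z by apply: Rnot_le_lt => le1; nra.
have M0 : (1 <= M)%nat by apply/leP/INR_lt; rewrite /=; lra.
have lnzM : ln z <= ln (INR M) by apply: ln_le_compat.
have := ln_fact_lower M0 => fact_lower.
apply/ltP/INR_lt/ln_lt_inv; [by rewrite INR_expn2; apply: pow_lt; lra|exact: INR_fact_pos|].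
rewrite INR_expn2 ln_pow; last lra.
nra.
Qed.

Lemma log_slack d L : 0 < d -> 0 < L -> 16 / d + 9 < ln L ->
  L < (1 + d / 2) * (L - ln L - 2).
Proof.
move=> d0 L0 big; set y := ln L in big *.
have d16 : 0 < 16 / d by apply: Rdiv_lt_0_compat; lra.
have Ly : y * y / 4 <= L by rewrite -(exp_ln L) //; apply: sq_le_exp; lra.
have dy : d * y > 16 + 9 * d.
  have -> : 16 + 9 * d = d * (16 / d + 9) by field; lra.
  exact: Rmult_lt_compat_l.
have : d / 2 * (y * y / 4) > (1 + d / 2) * (y + 2) by nra.
nra.
Qed.

(* Since ln N = o(N), eventually d/2 * N ln 2 / ln N >= 1: rounding up costs
   less than the extra d/2 in the factor 1 + d. *)
Lemma log_small d N : 0 < d -> 0 < N -> 16 / d <= ln N -> 1 <= d / 2 * N * ln 2 / ln N.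
Proof.
move=> d0 N0 big; set L := ln N in big *; have l2 := ln_lt_2.
have d16 : 0 < 16 / d by apply: Rdiv_lt_0_compat; lra.
have L0 : 0 < L by lra.
have NL : L * L / 4 <= N by rewrite -(exp_ln N) //; apply: sq_le_exp; lra.
have dL : 16 <= d * L.
  have -> : 16 = d * (16 / d) by field; lra.
  by apply: Rmult_le_compat_l; lra.
apply: (Rmult_le_reg_r L) => //.
have -> : d / 2 * N * ln 2 / L * L = d / 2 * N * ln 2 by field; lra.
have := Rmult_le_compat_l (d / 4) _ _ ltac:(lra) NL.
have := Rmult_le_compat_l (d / 2 * N) _ _ ltac:(nra) (Rlt_le _ _ l2).
have := Rmult_le_compat_r L _ _ ltac:(lra) dL.
lra.
Qed.

(* For z = (1 + d/2) N ln 2 / ln N, the slack of log_slack makes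
   z (ln z - 1) exceed N ln 2, using ln z >= ln N - ln ln N - 1. *)
Lemma ceiling_target d N : 0 < d -> 0 < N -> 0 < ln N ->
  ln N < (1 + d / 2) * (ln N - ln (ln N) - 2) ->
  let z := (1 + d / 2) * N * ln 2 / ln N in N * ln 2 < z * (ln z - 1).
Proof.
move=> d0 N0 L0 slack z; set L := ln N in L0 slack z *.
have l2 := ln_lt_2; have lnl := ln_ln2_ge; set l := ln 2 in l2 lnl z *.
set q := N * l / L; have q0 : 0 < q by apply: Rdiv_lt_0_compat; nra.
have ln_z : L - ln L - 1 <= ln z.
  have iL : 0 < / L by apply: Rinv_0_lt_compat.
  have -> : z = (1 + d / 2) * (N * (l * / L)) by rewrite /z; field; lra.
  have : 0 <= ln (1 + d / 2) by rewrite -ln_1; apply: ln_le_compat; lra.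
  rewrite !ln_mult ?ln_Rinv -/L; try lra; repeat apply: Rmult_lt_0_compat; lra.
have zq : z = (1 + d / 2) * q by rewrite /z /q; field; lra.
have z0 : 0 < z by rewrite zq; nra.
have -> : N * l = L * q by rewrite /q; field; lra.
have : z * (L - ln L - 2) = (1 + d / 2) * (L - ln L - 2) * q by rewrite zq; ring.
have : z * (L - ln L - 2) <= z * (ln z - 1) by apply: Rmult_le_compat_l; lra.
have : L * q < (1 + d / 2) * (L - ln L - 2) * q by apply: Rmult_lt_compat_r.
lra.
Qed.

(* For every d > 0 and n large, some m <= (1 + d) n / log n has m! > 2^n:
   take m the ceiling of (1 + d/2) n ln 2 / ln n. *)
Lemma factorial_beats_pow2 d : 0 < d -> exists n0, forall n, (n0 <= n)%nat ->
  exists m, (expn 2 n < m`!)%nat /\ INR m <= (1 + d) * INR n / (ln (INR n) / ln 2).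
Proof.
move=> d0; set Y0 := 16 / d + 9.
have [n0 n0_big] := INR_unbounded (exp (exp Y0)).
exists n0 => n n0n; set N := INR n; set L := ln N.
have N_big : exp (exp Y0) < N by have := le_INR _ _ (elimT leP n0n); rewrite -/N; lra.
have N0 : 0 < N by have := exp_pos (exp Y0); lra.
have L_big : exp Y0 < L by rewrite -(ln_exp (exp Y0)); apply: ln_increasing => //; apply: exp_pos.
have L0 : 0 < L by have := exp_pos Y0; lra.
have lnL_big : Y0 < ln L by rewrite -(ln_exp Y0); apply: ln_increasing => //; apply: exp_pos.
have L16 : 16 / d <= L by have := exp_ineq1_le Y0; rewrite /Y0 in L_big *; lra.
set z := (1 + d / 2) * N * ln 2 / L.
have target : N * ln 2 < z * (ln z - 1) := ceiling_target d0 N0 L0 (log_slack d0 L0 lnL_big).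
have round : 1 <= d / 2 * N * ln 2 / L := log_small d0 N0 L16.
have z0 : 0 < z.
  by apply: Rdiv_lt_0_compat => //; repeat apply: Rmult_lt_0_compat; have := ln_lt_2; lra.
have [zm mz] := archimed z.
have up0 : (0 <= up z)%Z by apply: le_0_IZR; lra.
exists (Z.to_nat (up z)); rewrite INR_IZR_INZ Z2Nat.id //; split.
  by apply: (pow2_lt_fact z0) => //; rewrite INR_IZR_INZ Z2Nat.id //; lra.
have -> : (1 + d) * N / (L / ln 2) = z + d / 2 * N * ln 2 / L.
  by rewrite /z; field; have := ln_lt_2; lra.
lra.
Qed.

End Asymptotics.

Theorem corollary4 :
  forall eps : R, (0 < eps)%R ->
  exists n0 : nat, forall n : nat, n0 <= n ->
    exists rJ rSD : nat,
      is_ramsey_number Jle (@Qle n) rJ /\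
      is_ramsey_number (@SDle 1 2) (@Qle n) rSD /\
      rJ <= rSD /\
      (INR rSD <= INR n + (2 + eps) * INR n / (ln (INR n) / ln 2))%R.
Proof.
move=> eps eps0.
have [n0 choose_m] := factorial_beats_pow2 (Rlt_mult_inv_pos _ _ eps0 Rlt_0_2).
exists n0 => n n0n; have [m [big m_small]] := choose_m n n0n.
have [rSD [rSD_ramsey rSD_le]] := ramsey_number_le (ramsey_SD12 big).
have [rJ [rJ_ramsey rJ_le]] := ramsey_number_le (ramsey_J_of_SD12 (proj1 rSD_ramsey)).
exists rJ, rSD; do 3!split=> //.
apply: Rle_trans (_ : INR (n + (m + m)) <= _)%R; first exact/le_INR/leP.
rewrite !plus_INR; set q := (ln (INR n) / ln 2)%R in m_small *.
have -> : ((2 + eps) * INR n / q = 2 * ((1 + eps / 2) * INR n / q))%R.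
  by rewrite /Rdiv; set iq := (/ q)%R; field.
lra.
Qed.
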